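(* For Global SEMO (standard mutation, fitness $f=(Cost,LP)$) on the weighted vertex cover problem, the search point $0^n$ is included in the population in expected time $O\big(OPT\cdot n(\log W_{max}+\log n)\big)$.
   Context: Weighted vertex cover: $G=(V,E)$, $V=\{v_1,\dots,v_n\}$, $w:V\to\mathbb{N}^+$, $W_{max}=\max_v w(v)$; $OPT$ is the minimum weight of a vertex cover. Search points $x\in\{0,1\}^n$; $Cost(x)=\sum_i w(v_i)x_i$; $G(x)$ is $G$ with selected vertices and edges having a selected endpoint removed; $LP(x)$ is the optimal value of: minimize $\sum_{v_i\in V(x)}w(v_i)y_i$ s.t. $y_i+y_j\ge1$ for edges $\{v_i,v_j\}$ of $G(x)$, $0\le y_i\le1$. $f(x)\le f(y)$ means componentwise $\le$. Global SEMO: start with a uniformly random $x$, $P=\{x\}$; each iteration choose $x\in P$ uniformly at random, create $x'$ by flipping each bit independently with probability $1/n$; if no $y\in P$ has $f(y)\le f(x')$, add $x'$ to $P$ and delete all other $z\in P$ with $f(x')\le f(z)$. Time = number of iterations. *)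

From HB Require Import structures.
From mathcomp Require Import all_boot all_order all_algebra.
From mathcomp Require Import classical_sets reals exp.
Set Implicit Arguments. Unset Strict Implicit. Unset Printing Implicit Defensive.
Import Order.TTheory GRing.Theory Num.Theory.

Local Open Scope ring_scope.

Section WVC.
Variable R : realType.
Variable n : nat.
Variable e : rel 'I_n.
Variable w : 'I_n -> nat.

Definition bits := {ffun 'I_n -> bool}.

Definition is_vertex_cover (C : {set 'I_n}) : bool :=
  [forall i, forall j, e i j ==> (i \in C) || (j \in C)].

Definition weight (C : {set 'I_n}) : nat := (\sum_(i in C) w i)%N.

(* OPT = minimum weight of a vertex cover (setT is always a cover) *)
Definition OPT : nat :=
  let all := [set: 'I_n]%SET : {set 'I_n} in
  (\big[minn/weight all]_(C : {set 'I_n} | is_vertex_cover C) weight C)%N.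

Definition Wmax : nat := (\max_(i < n) w i)%N.

Definition cost (x : bits) : nat := (\sum_(i < n) w i * x i)%N.

(* LP(x): variables y_i for the non-selected vertices v_i in V(x);
   constraints for edges of G(x) (both endpoints non-selected). *)
Definition lp_feasible (x : bits) (y : 'I_n -> R) : Prop :=
  (forall i, ~~ x i -> 0 <= y i <= 1) /\
  (forall i j, e i j -> ~~ x i -> ~~ x j -> 1 <= y i + y j).

Definition lp_obj (x : bits) (y : 'I_n -> R) : R :=
  \sum_(i < n | ~~ x i) (w i)%:R * y i.

Definition LP (x : bits) : R :=
  inf [set v : R | exists y, lp_feasible x y /\ v = lp_obj x y]%classic.

Definition fle (x y : bits) : bool :=
  ((cost x <= cost y)%N && (LP x <= LP y)).

Definition update (P : {set bits}) (x' : bits) : {set bits} :=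
  if [exists y in P, fle y x'] then P
  else x' |: [set z in P | ~~ fle x' z].

Definition mutp (x x' : bits) : R :=
  \prod_(i < n) (if x i != x' i then n%:R^-1 else 1 - n%:R^-1).

(* one-iteration transition probability of the population Markov chain *)
Definition kernel (P P' : {set bits}) : R :=
  #|P|%:R^-1 * \sum_(x in P) \sum_(x' : bits) mutp x x' * (update P x' == P')%:R.

Definition init (P : {set bits}) : R :=
  \sum_(x : bits) (2%:R ^- n) * (P == [set x])%:R.

Definition zero_bits : bits := [ffun _ => false].

(* surv t P = Pr[ P_t = P and 0^n notin P_s for all s <= t ] *)
Fixpoint surv (t : nat) (P : {set bits}) : R :=
  (zero_bits \notin P)%:R *
  match t with
  | 0 => init P
  | t'.+1 => \sum_(Q : {set bits}) surv t' Q * kernel Q P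
  end.

(* Pr[T > t], T = number of iterations until 0^n is in the population *)
Definition prob_T_gt (t : nat) : R := \sum_(P : {set bits}) surv t P.

End WVC.

From HB Require Import structures.
From mathcomp Require Import all_boot all_order all_algebra.
From mathcomp Require Import classical_sets reals exp sequences.
From mathcomp Require Import ring lra zify.
Import Order.TTheory GRing.Theory Num.Theory.
Local Open Scope ring_scope.
Set Implicit Arguments. Unset Strict Implicit. Unset Printing Implicit Defensive.

(* A Global SEMO population is an antichain for f = (Cost, LP).  LP(x) is attained
   by a half-integral solution and LP(x) <= OPT, so LP takes at most 2 OPT + 1
   values on a population, which bounds its size.  With c the least cost in the
   population, the potential e n (2 OPT + 1) (1 + ln c) never increases, and
   flipping exactly one selected bit v_i of a cheapest point (probability at least
   1/(e n |P|)) lowers ln c by at least w(v_i)/c; summing over the selected bits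
   gives an expected decrease of at least 1 per iteration.  By additive drift, the
   expected time is at most the initial potential, O(OPT n (log W_max + log n)). *)

Lemma bigminn_le (I : finType) (P : pred I) (F : I -> nat) x0 i :
  P i -> (\big[minn/x0]_(j | P j) F j <= F i)%N.
Proof. by rewrite -minEnat -leEnat; exact: bigmin_le_cond. Qed.

Lemma bigminn_le_id (I : finType) (P : pred I) (F : I -> nat) x0 :
  (\big[minn/x0]_(j | P j) F j <= x0)%N.
Proof. by rewrite -minEnat -leEnat; exact: bigmin_le_id. Qed.

Lemma bigminn_attained (I : finType) (P : pred I) (F : I -> nat) x0 i0 :
  P i0 -> (forall i, P i -> F i <= x0)%N ->
  exists2 i, P i & \big[minn/x0]_(j | P j) F j = F i.
Proof.
move=> Pi0 le_x0; rewrite -minEnat (bigmin_eq_arg x0 i0 _ _ Pi0 le_x0).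
by case: arg_minP => // i Pi _; exists i.
Qed.

Lemma ln_ge1subV (R : realType) (x : R) : 0 < x -> 1 - x^-1 <= ln x.
Proof.
move=> x_gt0; have := @le_ln1Dx R (x^-1 - 1).
rewrite [1 + _]addrC subrK lnV ?posrE // ltrBrDl subrr invr_gt0 => /(_ x_gt0).
lra.
Qed.

Lemma ln_nat_ge0 (R : realType) (k : nat) : (0 < k)%N -> 0 <= ln (k%:R : R).
Proof. by move=> k_gt0; rewrite ln_ge0 // ler1n. Qed.

Lemma ler_ln_nat (R : realType) (a b : nat) :
  (0 < a)%N -> (a <= b)%N -> ln (a%:R : R) <= ln b%:R.
Proof.
by move=> a_gt0 ab; rewrite ler_ln ?posrE ?ltr0n ?ler_nat //; exact: leq_trans ab.
Qed.

Lemma inv_expR1_le_pow (R : realType) (m : nat) :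
  (expR 1)^-1 <= (1 - m.+1%:R^-1) ^+ m :> R.
Proof.
have [-> | m_gt0] := posnP m.
  by rewrite expr0 invf_le1 ?expR_gt0 // ltW // expR_gt1.
have m0 : (m%:R : R) != 0 by rewrite pnatr_eq0 -lt0n.
have -> : 1 - (m.+1%:R : R)^-1 = (1 + m%:R^-1)^-1.
  by rewrite -addn1 natrD; field; rewrite m0 natr1 pnatr_eq0.
have inv_gt0 : 0 < 1 + (m%:R : R)^-1 by rewrite ltr_pwDl ?invr_ge0 ?ler0n.
rewrite exprVn lef_pV2 ?posrE ?exprn_gt0 ?expR_gt0 //.
apply: le_trans (_ : expR (m%:R^-1) ^+ m <= _).
  by rewrite lerXn2r ?nnegrE ?expR_ge1Dx // ltW // expR_gt0.
by rewrite -expRM_natl mulfV.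
Qed.

Lemma OPT_attained n (e : rel 'I_n) (w : 'I_n -> nat) :
  exists2 C, is_vertex_cover e C & OPT e w = weight w C.
Proof.
rewrite /OPT /=; apply: (bigminn_attained (i0 := [set: 'I_n]%SET)) => [|C _].
  by apply/forallP=> i; apply/forallP=> j; rewrite !finset.in_setT implybT.
rewrite /weight big_mkcond [X in (_ <= X)%N]big_mkcond /=.
by apply: leq_sum => i _; rewrite finset.in_setT; case: ifP.
Qed.

Lemma OPT_gt0 n (e : rel 'I_n) (w : 'I_n -> nat) :
  (exists i j, e i j) -> (forall i, 0 < w i)%N -> (0 < OPT e w)%N.
Proof.
move=> [i [j eij]] w_gt0; have [C C_cover ->] := OPT_attained e w.
move/forallP: C_cover => /(_ i) /forallP /(_ j); rewrite eij /=.
by case/orP=> kC; rewrite /weight (bigD1 _ kC) /= ltn_addr.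
Qed.

(** * Half-integrality of LP(x) *)
Section HalfIntegrality.
Variables (n : nat) (e : rel 'I_n) (w : 'I_n -> nat) (x : bits n).

(* Half-integral solutions of LP(x), scaled by 2 so that they take values in 'I_3. *)
Definition double_half_feasible (f : {ffun 'I_n -> 'I_3}) : bool :=
  [forall i, forall j, [&& e i j, ~~ x i & ~~ x j] ==> (2 <= f i + f j)%N].

Definition double_obj (f : {ffun 'I_n -> 'I_3}) : nat :=
  (\sum_(i < n | ~~ x i) w i * f i)%N.

Definition double_top : {ffun 'I_n -> 'I_3} := [ffun => ord_max].

Definition double_LP : nat :=
  \big[minn/double_obj double_top]_(f | double_half_feasible f) double_obj f.

Lemma double_top_feasible : double_half_feasible double_top.
Proof. by apply/forallP=> i; apply/forallP=> j; rewrite !ffunE; apply/implyP. Qed.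

Lemma double_LP_le f : double_half_feasible f -> (double_LP <= double_obj f)%N.
Proof. exact: bigminn_le. Qed.

Lemma double_LP_attained : exists2 f, double_half_feasible f & double_LP = double_obj f.
Proof.
apply: bigminn_attained double_top_feasible _ => f _.
by apply: leq_sum => i _; rewrite ffunE leq_mul2l -ltnS ltn_ord orbT.
Qed.

Lemma double_LP_le_double_OPT : (double_LP <= 2 * OPT e w)%N.
Proof.
have [C C_cover ->] := OPT_attained e w.
pose f : {ffun 'I_n -> 'I_3} := [ffun i => if i \in C then ord_max else ord0].
apply: leq_trans (double_LP_le (f := f) _) _.
  apply/forallP=> i; apply/forallP=> j; apply/implyP => /and3P[eij _ _].
  move/forallP: C_cover => /(_ i) /forallP /(_ j); rewrite eij /= !ffunE.
  by case: (i \in C); case: (j \in C).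
rewrite /double_obj /weight big_distrr /= big_mkcond [X in (_ <= X)%N]big_mkcond /=.
apply: leq_sum => i _; rewrite ffunE.
by case: (x i); case: (i \in C); rewrite //= ?muln0 // mulnC.
Qed.

Variable R : realType.

Definition half_integral (r : R) : bool := [|| r == 0, r == 2^-1 | r == 1].

Lemma half_integralP r : reflect [\/ r = 0, r = 2^-1 | r = 1] (half_integral r).
Proof.
apply: (iffP or3P) => -[] /eqP r_eq; by [apply: Or31 | apply: Or32 | apply: Or33].
Qed.

Definition fractional (y : 'I_n -> R) : {set 'I_n} :=
  [set i | ~~ x i & ~~ half_integral (y i)].

Definition half_code (r : R) : 'I_3 :=
  if r == 0 then ord0 else if r == 2^-1 then inord 1 else ord_max.

Lemma half_codeK r : half_integral r -> ((half_code r : nat)%:R : R) = 2 * r.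
Proof.
have h2 : (2^-1 : R) != 0 by rewrite invr_eq0 pnatr_eq0.
have h1 : (1 : R) != 2^-1 by apply/negP => /eqP h; lra.
case/half_integralP=> ->; rewrite /half_code.
- by rewrite eqxx mulr0.
- by rewrite (negbTE h2) eqxx inordK // mulfV ?pnatr_eq0.
- by rewrite oner_eq0 (negbTE h1) mulr1.
Qed.

Definition halve (f : {ffun 'I_n -> 'I_3}) (i : 'I_n) : R := (f i : nat)%:R / 2.

Lemma lp_obj_halve f : lp_obj w x (halve f) = (double_obj f)%:R / 2.
Proof.
rewrite /double_obj natr_sum mulr_suml; apply: eq_bigr => i _.
by rewrite natrM mulrA.
Qed.

Lemma lp_feasible_halve f : double_half_feasible f -> lp_feasible e x (halve f).
Proof.
rewrite /halve => f_feas; split=> [i _ | i j eij xi xj].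
  have := ltn_ord (f i); rewrite ltnS -(ler_nat R) => fi_le2.
  by rewrite divr_ge0 ?ler0n //=; lra.
move/forallP: f_feas => /(_ i) /forallP /(_ j).
rewrite eij xi xj /= -(ler_nat R) natrD => h; lra.
Qed.

Lemma double_of_half_integral y : lp_feasible e x y -> #|fractional y| = 0%N ->
  exists2 f, double_half_feasible f & (double_obj f)%:R / 2 = lp_obj w x y.
Proof.
move=> [_ y_edge] no_frac.
have y_half i : ~~ x i -> half_integral (y i).
  move=> xi; apply/negPn/negP => yi_frac.
  by have := card0_eq no_frac i; rewrite inE xi yi_frac.
pose f : {ffun 'I_n -> 'I_3} := [ffun i => half_code (y i)].
have fE i : ~~ x i -> ((f i : nat)%:R : R) = 2 * y i.
  by move=> xi; rewrite ffunE half_codeK ?y_half.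
exists f.
  apply/forallP=> i; apply/forallP=> j; apply/implyP => /and3P[eij xi xj].
  rewrite -(ler_nat R) natrD fE // fE //; have := y_edge i j eij xi xj; lra.
rewrite -lp_obj_halve; apply: eq_bigr => i xi.
by rewrite /halve fE // [2 * _]mulrC mulfK // pnatr_eq0.
Qed.

(* Fractional coordinates below 1/2 move by -t and those above 1/2 by +t: an edge
   constraint between two fractional coordinates is then either slack or keeps its
   sum, and t is chosen, with the sign that does not increase the objective, so
   that some fractional coordinate lands in {0, 1/2, 1}. *)
Section RoundingStep.
Variable y : 'I_n -> R.
Hypothesis y_feas : lp_feasible e x y.

Let B := fractional y.
Let dir i : R := if i \in B then (if y i < 2^-1 then -1 else 1) else 0.
Let shift (t : R) i := y i + t * dir i.
Let slack_out i : R := if y i < 2^-1 then y i else 1 - y i.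
Let slack_in i : R := if y i < 2^-1 then 2^-1 - y i else y i - 2^-1.
Let admissible t := forall i, i \in B -> - slack_in i <= t <= slack_out i.

Lemma fractional_range i : i \in B -> [/\ ~~ x i, 0 < y i, y i < 1 & y i != 2^-1].
Proof.
rewrite inE => /andP[xi frac]; have /andP[y0 y1] := y_feas.1 i xi.
move: frac; rewrite /half_integral !negb_or => /and3P[ne0 neh ne1].
by split=> //; rewrite lt_neqAle ?y0 ?y1 ?andbT // eq_sym.
Qed.

Lemma slack_out_gt0 i : i \in B -> 0 < slack_out i.
Proof.
move=> /fractional_range[_ y0 y1 yh]; rewrite /slack_out.
by case: (ltgtP (y i) 2^-1) yh => // h _; lra.
Qed.

Lemma slack_in_gt0 i : i \in B -> 0 < slack_in i.
Proof.
move=> /fractional_range[_ y0 y1 yh]; rewrite /slack_in.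
by case: (ltgtP (y i) 2^-1) yh => // h _; lra.
Qed.

Lemma lp_obj_shift t :
  lp_obj w x (shift t) = lp_obj w x y + t * \sum_(i < n | ~~ x i) (w i)%:R * dir i.
Proof.
rewrite /lp_obj mulr_sumr -big_split /=; apply: eq_bigr => i _.
by rewrite /shift; ring.
Qed.

Lemma shift_region t i : admissible t -> ~~ x i ->
  [\/ [/\ 0 < y i < 2^-1, 0 <= shift t i <= 2^-1 & shift t i = y i - t],
      [/\ 2^-1 < y i < 1, 2^-1 <= shift t i <= 1 & shift t i = y i + t] |
      shift t i = y i /\ [\/ y i = 0, y i = 2^-1 | y i = 1]].
Proof.
move=> adm xi; rewrite /shift /dir; case: ifPn => iB; last first.
  apply: Or33; split; first by rewrite mulr0 addr0.
  by move: iB; rewrite inE xi negbK => /half_integralP.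
have := adm i iB; have [_ y0 y1 yh] := fractional_range iB.
rewrite /slack_in /slack_out; case: (ltgtP (y i) 2^-1) yh => // h _ /andP[lo hi].
  by apply: Or31; split; rewrite ?y0 //; [apply/andP; split|]; lra.
by apply: Or32; split; rewrite ?y1 //; [apply/andP; split|]; lra.
Qed.

Lemma shift_feasible t : admissible t -> lp_feasible e x (shift t).
Proof.
move=> adm; split=> [i xi | i j eij xi xj].
  case: (shift_region adm xi) => [[_ /andP[? ?] _]|[_ /andP[? ?] _]|[-> _]].
  - by apply/andP; split; lra.
  - by apply/andP; split; lra.
  - exact: y_feas.1.
have := y_feas.2 i j eij xi xj.
case: (shift_region adm xi) => [[/andP[? ?] /andP[? ?] ?]|[/andP[? ?] /andP[? ?] ?]|[? [] ?]];
case: (shift_region adm xj) => [[/andP[? ?] /andP[? ?] ?]|[/andP[? ?] /andP[? ?] ?]|[? [] ?]];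
lra.
Qed.

Lemma shift_fractional t : fractional (shift t) \subset B.
Proof.
apply/fintype.subsetP => i; rewrite !inE => /andP[xi]; rewrite xi /=.
by apply: contraNN => frac; rewrite /shift /dir inE xi frac mulr0 addr0.
Qed.

Lemma shift_at_slack t i : i \in B -> t = slack_out i \/ t = - slack_in i ->
  half_integral (shift t i).
Proof.
move=> iB; have [_ _ _ yh] := fractional_range iB.
rewrite /half_integral /shift /dir iB /slack_out /slack_in.
case: (ltgtP (y i) 2^-1) yh => // h _ [] ->.
- by rewrite mulrN1 subrr eqxx.
- by rewrite mulrN1 opprK addrC subrK eqxx orbT.
- by rewrite mulr1 addrC subrK eqxx !orbT.
- by rewrite mulr1 addrC opprB subrK eqxx orbT.
Qed.

Lemma exists_admissible_step : (0 < #|B|)%N -> exists t i,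
  [/\ admissible t, t * \sum_(j < n | ~~ x j) (w j)%:R * dir j <= 0, i \in B
    & t = slack_out i \/ t = - slack_in i].
Proof.
move=> /card_gt0P[i1 i1B]; set D := \sum_(j < n | _) _.
have [D_le0 | D_gt0] := leP D 0.
  case: (@arg_minP _ _ _ i1 (mem B) slack_out i1B) => i iB i_min.
  exists (slack_out i), i; split=> //; last by left.
    move=> j jB; rewrite i_min // andbT.
    by have := slack_in_gt0 jB; have := slack_out_gt0 iB; lra.
  by rewrite mulr_ge0_le0 // ltW // slack_out_gt0.
case: (@arg_minP _ _ _ i1 (mem B) slack_in i1B) => i iB i_min.
exists (- slack_in i), i; split=> //; last by right.
  move=> j jB; rewrite lerN2 i_min //=.
  by have := slack_out_gt0 jB; have := slack_in_gt0 iB; lra.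
by rewrite mulNr oppr_le0 mulr_ge0 // ltW // slack_in_gt0.
Qed.

Lemma rounding_step : (0 < #|B|)%N -> exists y',
  [/\ lp_feasible e x y', lp_obj w x y' <= lp_obj w x y & (#|fractional y'| < #|B|)%N].
Proof.
move=> /exists_admissible_step[t [i [adm tD iB at_slack]]].
exists (shift t); split; first exact: shift_feasible.
  by rewrite lp_obj_shift gerDl.
apply/proper_card/properP; split; first exact: shift_fractional.
by exists i; rewrite // inE negb_and negbK shift_at_slack ?orbT.
Qed.
End RoundingStep.

Lemma half_integral_rounding (y : 'I_n -> R) : lp_feasible e x y ->
  exists2 f, double_half_feasible f & (double_obj f)%:R / 2 <= lp_obj w x y.
Proof.
elim: {y}_.+1 {-2}y (ltnSn #|fractional y|) => // k IH y y_card y_feas.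
have [frac0 | frac_gt0] := posnP #|fractional y|.
  by have [f f_feas <-] := double_of_half_integral y_feas frac0; exists f.
have [y' [y'_feas y'_le y'_card]] := rounding_step y_feas frac_gt0.
have [f f_feas f_le] := IH y' (leq_trans y'_card y_card) y'_feas.
by exists f => //; exact: le_trans y'_le.
Qed.

Lemma LP_half_integral : LP R e w x = double_LP%:R / 2.
Proof.
rewrite /LP; set S := [set v | _]%classic.
have [f f_feas f_opt] := double_LP_attained.
have S_half : S (double_LP%:R / 2).
  by exists (halve f); rewrite lp_obj_halve f_opt; split=> //; exact: lp_feasible_halve.
have S_lb : lbound S (double_LP%:R / 2).
  move=> _ [y [y_feas ->]]; have [g g_feas g_le] := half_integral_rounding y_feas.
  by apply: le_trans g_le; rewrite ler_pM2r ?invr_gt0 ?ltr0n // ler_nat double_LP_le.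
apply/le_anti/andP; split; first by apply: ge_inf S_half; exists (double_LP%:R / 2).
by apply: lb_le_inf S_lb; exists (double_LP%:R / 2).
Qed.
End HalfIntegrality.

Section Population.
Variables (R : realType) (n : nat) (e : rel 'I_n) (w : 'I_n -> nat).

Definition antichain (P : {set bits n}) : bool :=
  [forall a in P, forall b in P, (a != b) ==> ~~ fle R e w a b].

Definition valid_population (P : {set bits n}) : bool := (0 < #|P|)%N && antichain P.

Lemma valid_population1 x : valid_population [set x].
Proof.
rewrite /valid_population cards1; apply/forallP => a; apply/implyP; rewrite inE => /eqP ->.
by apply/forallP => b; apply/implyP; rewrite inE => /eqP ->; rewrite eqxx.
Qed.

Lemma valid_update P x' : valid_population P -> valid_population (update R e w P x').
Proof.
rewrite /update; case: ifP => // /negbT x'_new /andP[_ /forallP P_anti].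
apply/andP; split; first by apply/card_gt0P; exists x'; exact: setU11.
apply/forallP => a; apply/implyP; rewrite !inE => a_in.
apply/forallP => b; apply/implyP; rewrite !inE => b_in.
case/orP: a_in => [/eqP ->|/andP[aP a_kept]]; case/orP: b_in => [/eqP ->|/andP[bP b_kept]].
- by rewrite eqxx.
- by apply/implyP.
- by apply/implyP => _; apply: contra x'_new => a_le; apply/existsP; exists a; exact/andP.
- by have := P_anti a; rewrite aP /= => /forallP /(_ b); rewrite bP.
Qed.

(* Two search points with the same LP value are comparable, so LP is injective on
   an antichain; by half-integrality it takes at most 2 OPT + 1 values. *)
Lemma card_antichain P : antichain P -> (#|P| <= (2 * OPT e w).+1)%N.
Proof.
move/forallP => P_anti.
pose code (a : bits n) : 'I_(2 * OPT e w).+1 := inord (double_LP e w a).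
rewrite -[X in (_ <= X)%N]card_ord; apply: (leq_card_in code) => a b aP bP /= code_ab.
have LP_ab : LP R e w a = LP R e w b.
  move: (congr1 val code_ab); rewrite /= !inordK ?ltnS ?double_LP_le_double_OPT //.
  by rewrite !LP_half_integral => ->.
apply/eqP; apply: contraT => a_neq_b.
have := P_anti a; rewrite aP /= => /forallP /(_ b); rewrite bP a_neq_b /=.
have := P_anti b; rewrite bP /= => /forallP /(_ a); rewrite aP eq_sym a_neq_b /=.
rewrite /fle LP_ab lexx !andbT.
by case/orP: (leq_total (cost w a) (cost w b)) => ->.
Qed.

End Population.

(** * Mutation and the transition kernel *)

Section Mutation.
Variables (R : realType) (n : nat).

Lemma mutp_ge0 (x x' : bits n) : 0 <= mutp R x x'.
Proof.
have inv_n_le1 : (n%:R : R)^-1 <= 1.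
  by have [->|n_gt0] := posnP n; rewrite ?invr0 // invf_le1 ?ltr0n // ler1n.
by apply: prodr_ge0 => i _; case: ifP; rewrite ?invr_ge0 ?ler0n ?subr_ge0.
Qed.

Lemma sum_mutp (x : bits n) : \sum_(x' : bits n) mutp R x x' = 1.
Proof.
rewrite /mutp -(bigA_distr_bigA (fun i b => if x i != b then (n%:R : R)^-1 else 1 - n%:R^-1)).
by rewrite big1 // => i _; rewrite big_bool /=; case: (x i) => /=; ring.
Qed.

Definition flip (z : bits n) (i : 'I_n) : bits n :=
  [ffun j => if j == i then ~~ z j else z j].

Lemma flip_inj (z : bits n) : injective (flip z).
Proof.
move=> i j /ffunP /(_ i); rewrite !ffunE eqxx.
by case: eqP => // _; case: (z i).
Qed.

Lemma mutp_flip (z : bits n) i :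
  mutp R z (flip z i) = n%:R^-1 * (1 - n%:R^-1) ^+ n.-1.
Proof.
rewrite /mutp (bigD1 i) //= ffunE eqxx; case: (z i) => /=; congr (_ * _);
  by rewrite (eq_bigr (fun _ => 1 - (n%:R : R)^-1)) ?prodr_const ?cardC1 ?card_ord //
       => j j_neq_i; rewrite ffunE (negbTE j_neq_i) eqxx.
Qed.

Lemma mutp_flip_ge (z : bits n) i : (n%:R * expR 1)^-1 <= mutp R z (flip z i).
Proof.
rewrite mutp_flip invfM ler_wpM2l ?invr_ge0 ?ler0n //.
by case: n i => [[]|m _] //; exact: inv_expR1_le_pow.
Qed.

End Mutation.

Section Kernel.
Variables (R : realType) (n : nat) (e : rel 'I_n) (w : 'I_n -> nat).

Lemma kernel_ge0 (P P' : {set bits n}) : 0 <= kernel R e w P P'.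
Proof.
rewrite /kernel mulr_ge0 ?invr_ge0 ?ler0n //.
by apply: sumr_ge0 => x _; apply: sumr_ge0 => x' _; rewrite mulr_ge0 ?ler0n ?mutp_ge0.
Qed.

Lemma kernel_expectation (P : {set bits n}) (g : {set bits n} -> R) :
  \sum_(P' : {set bits n}) kernel R e w P P' * g P' =
  #|P|%:R^-1 * \sum_(x in P) \sum_(x' : bits n) mutp R x x' * g (update R e w P x').
Proof.
rewrite /kernel; under eq_bigr do rewrite -mulrA; rewrite -mulr_sumr; congr (_ * _).
under eq_bigr do rewrite mulr_suml; rewrite exchange_big; apply: eq_bigr => x _.
under eq_bigr do rewrite mulr_suml; rewrite exchange_big; apply: eq_bigr => x' _.
under eq_bigr do rewrite -mulrA; rewrite -mulr_sumr; congr (_ * _).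
rewrite (bigD1 (update R e w P x')) //= eqxx mul1r big1 ?addr0 // => P' P'_neq.
by rewrite eq_sym (negbTE P'_neq) mul0r.
Qed.

End Kernel.

(** * Potential and drift *)

Section Potential.
Variables (R : realType) (n : nat) (e : rel 'I_n) (w : 'I_n -> nat).
Hypothesis w_gt0 : forall i, (0 < w i)%N.
Hypothesis n_gt0 : (0 < n)%N.

Definition total_weight : nat := (\sum_(i < n) w i)%N.

Definition min_cost (P : {set bits n}) : nat :=
  \big[minn/total_weight]_(z in P) cost w z.

(* e n compensates the probability 1/(e n) of a given single-bit flip and 2 OPT + 1
   bounds the population size, so that the expected potential drops by 1 per step. *)
Definition drift_scale : R := expR 1 * n%:R * (2 * OPT e w).+1%:R.

Definition potential (P : {set bits n}) : R :=
  if zero_bits n \in P then 0 else drift_scale * (1 + ln (min_cost P)%:R).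

Lemma drift_scaleE : (n%:R * expR 1)^-1 * drift_scale = (2 * OPT e w).+1%:R.
Proof.
have n0 : (n%:R : R) != 0 by rewrite pnatr_eq0 -lt0n.
by rewrite /drift_scale; field; rewrite n0 gt_eqF ?expR_gt0.
Qed.

Lemma drift_scale_ge0 : 0 <= drift_scale.
Proof. by rewrite !mulr_ge0 ?ler0n ?expR_ge0. Qed.

Lemma total_weight_gt0 : (0 < total_weight)%N.
Proof. by rewrite /total_weight (bigD1 (Ordinal n_gt0)) //= ltn_addr. Qed.

Lemma cost_le_total (x : bits n) : (cost w x <= total_weight)%N.
Proof. by apply: leq_sum => i _; case: (x i); rewrite ?muln1 ?muln0. Qed.

Lemma costE (x : bits n) : cost w x = (\sum_(i | x i) w i)%N.
Proof.
rewrite /cost [RHS]big_mkcond; apply: eq_bigr => i _.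
by case: (x i); rewrite ?muln1 ?muln0.
Qed.

Lemma cost_gt0 (x : bits n) : x != zero_bits n -> (0 < cost w x)%N.
Proof.
apply: contraR; rewrite -leqNgt leqn0 costE sum_nat_eq0 => /forallP x_false.
apply/eqP/ffunP => i; rewrite ffunE; apply: contraTF (x_false i) => xi.
by rewrite xi -lt0n w_gt0.
Qed.

Lemma cost_flip (z : bits n) i : z i -> (cost w (flip z i) + w i)%N = cost w z.
Proof.
move=> zi; rewrite /cost (bigD1 i) //= [RHS](bigD1 i) //= ffunE eqxx zi /=.
rewrite muln0 muln1 add0n addnC; congr (_ + _)%N.
by apply: eq_bigr => j j_neq_i; rewrite ffunE (negbTE j_neq_i).
Qed.

Lemma min_cost_le (P : {set bits n}) z : z \in P -> (min_cost P <= cost w z)%N.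
Proof. exact: bigminn_le. Qed.

Lemma min_cost_attained (P : {set bits n}) :
  (0 < #|P|)%N -> exists2 z, z \in P & min_cost P = cost w z.
Proof.
by case/card_gt0P => z0 z0P; exact: bigminn_attained z0P (fun z _ => cost_le_total z).
Qed.

Lemma min_cost_gt0 (P : {set bits n}) : zero_bits n \notin P -> (0 < min_cost P)%N.
Proof.
move=> P0; have [P_empty | P_gt0] := posnP #|P|.
  by rewrite /min_cost big_pred0 ?total_weight_gt0 // => z; rewrite (card0_eq P_empty).
have [z zP ->] := min_cost_attained P_gt0.
by apply: cost_gt0; apply: contraNneq P0 => <-.
Qed.

Lemma potential_ge0 (P : {set bits n}) : 0 <= potential P.
Proof.
rewrite /potential; case: ifPn => // P0.
rewrite mulr_ge0 ?mulr_ge0 ?ler0n ?expR_ge0 //.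
by have := ln_nat_ge0 R (min_cost_gt0 P0); lra.
Qed.

Lemma potential_le (P : {set bits n}) :
  potential P <= drift_scale * (1 + ln total_weight%:R).
Proof.
rewrite /potential; case: ifPn => P0.
  by rewrite mulr_ge0 ?drift_scale_ge0 //; have := ln_nat_ge0 R total_weight_gt0; lra.
rewrite ler_wpM2l ?drift_scale_ge0 // lerD2l ler_ln_nat ?min_cost_gt0 //.
exact: bigminn_le_id.
Qed.

Lemma min_cost_update (P : {set bits n}) x' :
  (min_cost (update R e w P x') <= min_cost P)%N.
Proof.
rewrite /update; case: ifP => // _.
have [P_empty | P_gt0] := posnP #|P|.
  by rewrite {2}/min_cost big_pred0 ?bigminn_le_id // => z; rewrite (card0_eq P_empty).
have [z zP ->] := min_cost_attained P_gt0.
case x'_le_z: (fle R e w x' z).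
  by apply: leq_trans (min_cost_le (setU11 _ _)) _; case/andP: x'_le_z.
by apply: min_cost_le; rewrite setU1r // inE zP x'_le_z.
Qed.

Lemma potential_update (P : {set bits n}) x' :
  zero_bits n \notin P -> potential (update R e w P x') <= potential P.
Proof.
move=> P0; rewrite {2}/potential (negbTE P0).
rewrite /potential; case: ifPn => U0.
  by rewrite mulr_ge0 ?drift_scale_ge0 //; have := ln_nat_ge0 R (min_cost_gt0 P0); lra.
by rewrite ler_wpM2l ?drift_scale_ge0 // lerD2l ler_ln_nat ?min_cost_gt0 ?min_cost_update.
Qed.

Lemma update_cheaper (P : {set bits n}) x' : (cost w x' < min_cost P)%N ->
  update R e w P x' = x' |: [set z in P | ~~ fle R e w x' z].
Proof.
move=> x'_cheaper; rewrite /update; case: ifP => // /existsP[z /andP[zP /andP[z_le _]]].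
by have := leq_ltn_trans (leq_trans (min_cost_le zP) z_le) x'_cheaper; rewrite ltnn.
Qed.

(* The offspring is cheaper than every point of P, so it enters the population,
   and ln c - ln c' >= 1 - c'/c for the new minimum cost c' <= c - w i. *)
Lemma potential_flip_drop (P : {set bits n}) z i :
  z \in P -> cost w z = min_cost P -> z i -> zero_bits n \notin P ->
  drift_scale * (w i)%:R / (min_cost P)%:R <=
    potential P - potential (update R e w P (flip z i)).
Proof.
move=> zP z_min zi P0; set c := min_cost P; set U := update R e w P (flip z i).
have c_gt0 : (0 < c)%N := min_cost_gt0 P0.
have c_pos : (0 : R) < c%:R by rewrite ltr0n.
have wi_le_c : (w i <= c)%N by rewrite /c -z_min -(cost_flip zi) leq_addl.
have flip_cost : (cost w (flip z i) + w i)%N = c by rewrite cost_flip.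
have U_le : (min_cost U <= c - w i)%N.
  rewrite /U update_cheaper; last by rewrite -/c -flip_cost; have := w_gt0 i; lia.
  by apply: leq_trans (min_cost_le (setU11 _ _)) _; rewrite -flip_cost addnK.
rewrite {1}/potential (negbTE P0) -/c -mulrA.
rewrite /potential; case: ifPn => U0.
  rewrite subr0 ler_wpM2l ?drift_scale_ge0 //.
  have : (w i)%:R / c%:R <= (1 : R) by rewrite ler_pdivrMr // mul1r ler_nat.
  by have := ln_nat_ge0 R c_gt0; lra.
rewrite -mulrBr ler_wpM2l ?drift_scale_ge0 // opprD addrACA subrr add0r.
rewrite -ln_div ?posrE ?ltr0n ?min_cost_gt0 //.
apply: le_trans (ln_ge1subV _); last by rewrite divr_gt0 ?ltr0n ?min_cost_gt0.
rewrite invf_div lerBrDr -mulrDl ler_pdivrMr // mul1r -natrD ler_nat.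
by move: U_le wi_le_c; lia.
Qed.

Lemma mutation_potential_le (P : {set bits n}) x : zero_bits n \notin P ->
  \sum_(x' : bits n) mutp R x x' * potential (update R e w P x') <= potential P.
Proof.
move=> P0; apply: le_trans (_ : \sum_(x' : bits n) mutp R x x' * potential P <= _).
  by apply: ler_sum => x' _; rewrite ler_wpM2l ?mutp_ge0 ?potential_update.
by rewrite -mulr_suml sum_mutp mul1r.
Qed.

Lemma mutation_potential_min (P : {set bits n}) z :
  z \in P -> cost w z = min_cost P -> zero_bits n \notin P ->
  \sum_(x' : bits n) mutp R z x' * potential (update R e w P x') <=
    potential P - (2 * OPT e w).+1%:R.
Proof.
move=> zP z_min P0; set c := min_cost P.
have c_pos : (c%:R : R) != 0 by rewrite pnatr_eq0 -lt0n min_cost_gt0.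
pose G x' := mutp R z x' * (potential P - potential (update R e w P x')).
have G_ge0 x' : 0 <= G x'.
  by rewrite mulr_ge0 ?mutp_ge0 // subr_ge0 potential_update.
suff : (2 * OPT e w).+1%:R <= \sum_(x' : bits n) G x'.
  by rewrite /G; under eq_bigr do rewrite mulrBr; rewrite sumrB -mulr_suml sum_mutp mul1r; lra.
pose S := [set i | z i].
apply: le_trans (_ : \sum_(x' in flip z @: S) G x' <= _); last first.
  by rewrite [X in _ <= X](bigID (mem (flip z @: S))) /= lerDl sumr_ge0.
rewrite big_imset /=; last by move=> i j _ _; exact: flip_inj.
apply: le_trans (_ : \sum_(i in S) (n%:R * expR 1)^-1 * (drift_scale * (w i)%:R / c%:R) <= _).
  rewrite -mulr_sumr -mulr_suml -mulr_sumr -natr_sum.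
  have -> : (\sum_(i in S) w i)%N = c.
    by rewrite /c -z_min costE; apply: eq_bigl => i; rewrite inE.
  by rewrite mulfK // drift_scaleE.
apply: ler_sum => i; rewrite inE => zi.
rewrite /G ler_pM ?mutp_flip_ge ?potential_flip_drop //.
  by rewrite invr_ge0 mulr_ge0 ?ler0n ?expR_ge0.
by rewrite divr_ge0 ?ler0n // mulr_ge0 ?ler0n ?drift_scale_ge0.
Qed.

Lemma drift (P : {set bits n}) : valid_population R e w P -> zero_bits n \notin P ->
  \sum_(P' : {set bits n}) kernel R e w P P' * potential P' <= potential P - 1.
Proof.
case/andP=> P_gt0 P_anti P0; have card_le := card_antichain P_anti.
have [z zP z_min] := min_cost_attained P_gt0.
pose F x := \sum_(x' : bits n) mutp R x x' * potential (update R e w P x').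
set K : R := (2 * OPT e w).+1%:R.
have sumF : \sum_(x in P) F x <= #|P|%:R * potential P - K.
  apply: le_trans (_ : \sum_(x in P) (potential P - (x == z)%:R * K) <= _).
    apply: ler_sum => x _; case: eqP => [->|_]; rewrite ?mul1r ?mul0r ?subr0.
      exact: mutation_potential_min.
    exact: mutation_potential_le.
  rewrite sumrB sumr_const (bigD1 z) //= eqxx mul1r big1 ?addr0 ?mulr_natl //.
  by move=> x /andP[_ /negbTE ->]; rewrite mul0r.
have P_pos : (0 : R) < #|P|%:R by rewrite ltr0n.
rewrite kernel_expectation -/F.
apply: le_trans (_ : #|P|%:R^-1 * (#|P|%:R * potential P - K) <= _).
  by apply: ler_wpM2l sumF; rewrite invr_ge0 ltW.
rewrite mulrBr mulKf ?gt_eqF // lerD2l lerN2 ler_pdivlMl // mulr1 ler_nat.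
exact: card_le.
Qed.

End Potential.

(** * Additive drift along the chain *)

Section Chain.
Variables (R : realType) (n : nat) (e : rel 'I_n) (w : 'I_n -> nat).
Hypothesis w_gt0 : forall i, (0 < w i)%N.
Hypothesis n_gt0 : (0 < n)%N.

Lemma init_ge0 (P : {set bits n}) : 0 <= init R P.
Proof. by apply: sumr_ge0 => x _; rewrite mulr_ge0 ?ler0n // invr_ge0 exprn_ge0. Qed.

Lemma sum_init : \sum_(P : {set bits n}) init R P = 1.
Proof.
rewrite /init exchange_big /= (eq_bigr (fun _ => (2%:R ^- n : R))); last first.
  move=> x _; rewrite (bigD1 [set x]) //= eqxx mulr1 big1 ?addr0 // => P P_neq.
  by rewrite (negbTE P_neq) mulr0.
rewrite sumr_const card_ffun card_bool card_ord -[_ *+ (2 ^ n)]mulr_natr natrX mulVf //.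
by rewrite expf_neq0 // pnatr_eq0.
Qed.

Lemma surv_ge0 t (P : {set bits n}) : 0 <= surv R e w t P.
Proof.
elim: t P => [|t IH] P /=; rewrite mulr_ge0 ?ler0n ?init_ge0 //.
by apply: sumr_ge0 => Q _; rewrite mulr_ge0 ?IH ?kernel_ge0.
Qed.

Lemma surv_zero t (P : {set bits n}) : zero_bits n \in P -> surv R e w t P = 0.
Proof. by case: t => [|t] /= ->; rewrite mul0r. Qed.

Lemma surv_invalid t (P : {set bits n}) :
  ~~ valid_population R e w P -> surv R e w t P = 0.
Proof.
elim: t P => [|t IH] P P_invalid /=.
  rewrite /init big1 ?mulr0 // => x _.
  by case: eqP P_invalid => [->|_]; rewrite ?valid_population1 ?mulr0.
rewrite big1 ?mulr0 // => Q _.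
case: (boolP (valid_population R e w Q)) => [Q_valid|/IH ->]; last by rewrite mul0r.
rewrite /kernel big1 ?mulr0 // => x _; rewrite big1 // => x' _.
by case: eqP P_invalid => [<-|_]; rewrite ?valid_update ?mulr0.
Qed.

Definition expected_potential t : R :=
  \sum_(P : {set bits n}) surv R e w t P * potential R e w P.

Lemma expected_potential_ge0 t : 0 <= expected_potential t.
Proof. by apply: sumr_ge0 => P _; rewrite mulr_ge0 ?surv_ge0 ?potential_ge0. Qed.

Lemma expected_potential_succ t : expected_potential t.+1 =
  \sum_(Q : {set bits n}) surv R e w t Q *
    \sum_(P : {set bits n}) kernel R e w Q P * potential R e w P.
Proof.
have zero_absorb (P : {set bits n}) :
    (zero_bits n \notin P)%:R * (\sum_Q surv R e w t Q * kernel R e w Q P) *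
      potential R e w P =
    \sum_Q surv R e w t Q * (kernel R e w Q P * potential R e w P).
  rewrite /potential; case: (zero_bits n \in P) => /=.
    by rewrite mulr0; apply/esym/big1 => Q _; rewrite !mulr0.
  by rewrite mul1r mulr_suml; apply: eq_bigr => Q _; rewrite -mulrA.
rewrite /expected_potential /= (eq_bigr _ (fun P _ => zero_absorb P)) exchange_big /=.
by apply: eq_bigr => Q _; rewrite mulr_sumr.
Qed.

Lemma expected_potential_step t :
  expected_potential t.+1 <= expected_potential t - prob_T_gt R e w t.
Proof.
rewrite expected_potential_succ /expected_potential /prob_T_gt -sumrB.
apply: ler_sum => Q _; rewrite -[X in _ - X]mulr1 -mulrBr.
case: (boolP (valid_population R e w Q)) => [Q_valid|/surv_invalid ->]; last by rewrite !mul0r.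
case: (boolP (zero_bits n \in Q)) => [/surv_zero ->|Q0]; first by rewrite !mul0r.
by rewrite ler_wpM2l ?surv_ge0 ?drift.
Qed.

Lemma expected_potential0_le :
  expected_potential 0 <= drift_scale R e w * (1 + ln (total_weight w)%:R).
Proof.
set bound := drift_scale R e w * _.
rewrite -[bound]mul1r -sum_init mulr_suml; apply: ler_sum => P _ /=.
apply: le_trans (_ : init R P * potential R e w P <= _).
  rewrite ler_wpM2r ?potential_ge0 //.
  by case: (_ \notin _); rewrite ?mul1r ?mul0r ?init_ge0.
by rewrite ler_wpM2l ?init_ge0 ?potential_le.
Qed.

Lemma sum_prob_T_gt_le N :
  \sum_(t < N) prob_T_gt R e w t <= drift_scale R e w * (1 + ln (total_weight w)%:R).
Proof.
suff telescope : \sum_(t < N) prob_T_gt R e w t <= expected_potential 0 - expected_potential N.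
  by have := expected_potential_ge0 N; have := expected_potential0_le; lra.
elim: N => [|N IH]; first by rewrite big_ord0 subrr.
by rewrite big_ord_recr /=; have := expected_potential_step N; lra.
Qed.

End Chain.

Lemma total_weight_le_Wmax n (w : 'I_n -> nat) : (total_weight w <= n * Wmax w)%N.
Proof.
rewrite /total_weight -[X in (_ <= X * _)%N]card_ord -sum_nat_const.
by apply: leq_sum => i _; exact: leq_bigmax.
Qed.

Lemma drift_scale_log_le (R : realType) n (e : rel 'I_n) (w : 'I_n -> nat) :
  (1 < n)%N -> (0 < OPT e w)%N -> (forall i, 0 < w i)%N ->
  drift_scale R e w * (1 + ln (total_weight w)%:R) <=
    expR 1 * 3 * (1 + (ln 2)^-1) * (OPT e w)%:R * n%:R * (ln (Wmax w)%:R + ln n%:R).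
Proof.
move=> n_gt1 OPT_pos w_gt0.
have n_gt0 : (0 < n)%N by exact: ltnW.
have Wmax_gt0 : (0 < Wmax w)%N by apply: leq_trans (w_gt0 (Ordinal n_gt0)) (leq_bigmax _).
have total_gt0 := total_weight_gt0 w_gt0 n_gt0.
set L := ln (Wmax w)%:R + ln (n%:R : R).
have ln2_gt0 : 0 < ln (2 : R) by rewrite ln_gt0 // ltr1n.
have L_ge_ln2 : ln 2 <= L.
  by have := ln_nat_ge0 R Wmax_gt0; have := @ler_ln_nat R 2 n isT n_gt1; rewrite /L; lra.
have ln_total : ln (total_weight w)%:R <= L.
  by rewrite /L addrC -lnM ?posrE ?ltr0n // -natrM ler_ln_nat // total_weight_le_Wmax.
have log_factor : 1 + ln (total_weight w)%:R <= (1 + (ln 2)^-1) * L.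
  have : 1 <= L / ln 2 by rewrite ler_pdivlMr ?mul1r.
  have -> : (1 + (ln 2)^-1) * L = L + L / ln 2 by ring.
  lra.
have opt_factor : ((2 * OPT e w).+1%:R : R) <= 3 * (OPT e w)%:R.
  by rewrite -natrM ler_nat; lia.
have := ln_nat_ge0 R total_gt0 => ln_total_ge0.
have -> : expR 1 * 3 * (1 + (ln 2)^-1) * (OPT e w)%:R * n%:R * L =
          expR 1 * n%:R * (3 * (OPT e w)%:R) * ((1 + (ln 2)^-1) * L) by ring.
rewrite /drift_scale ler_pM ?mulr_ge0 ?ler0n ?expR_ge0 //; first lra.
by rewrite ler_wpM2l ?mulr_ge0 ?ler0n ?expR_ge0.
Qed.

Unset Implicit Arguments.

Theorem lemma4 (R : realType) :
  exists C : R,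
  forall (n : nat) (e : rel 'I_n) (w : 'I_n -> nat),
    symmetric e -> irreflexive e -> (exists i j, e i j) ->
    (forall i, 0 < w i)%N ->
    forall N : nat,
      \sum_(t < N) prob_T_gt R e w t
        <= C * (OPT e w)%:R * n%:R * (ln (Wmax w)%:R + ln n%:R).
Proof.
exists (expR 1 * 3 * (1 + (ln (2 : R))^-1)).
move=> n e w _ e_irr has_edge w_gt0 N.
have n_gt1 : (1 < n)%N.
  case: has_edge => i [j eij].
  have : (i : nat) != j by apply: contraTneq eij => /val_inj ->; rewrite e_irr.
  by have := ltn_ord i; have := ltn_ord j; lia.
apply: le_trans (sum_prob_T_gt_le R e w_gt0 (ltnW n_gt1) N) _.
exact: drift_scale_log_le (OPT_gt0 has_edge w_gt0) w_gt0.
Qed.
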